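(* Let $n\geq 2$, $1\leq j\leq n$ and $1\leq k\leq n-1$. Let $p_{n,k}(j)$ be the probability that the value $j$ is a $k$-peak of a uniformly random permutation in $\mathfrak{S}_n$. Then $$p_{n,k}(j)=\begin{cases}0 & \text{if } j\leq k,\\[2pt] \dfrac{(j-k)(j-k+1)}{(n-k)(n-k+1)} & \text{if } j>k.\end{cases}$$
   Context: $\mathfrak{S}_n$ is the set of permutations $w=w_1\cdots w_n$ of $\{1,\dots,n\}$. A section of $w$ is a consecutive block $w_s\cdots w_t$ ($s\le t$). A section $w_s\cdots w_t$ is a $k$-up if $s<t$ and $w_t-w_s\geq k$, and a $k$-down if $s<t$ and $w_s-w_t\geq k$; a $k$-up/$k$-down ''in'' $w_a\cdots w_b$ means one $w_s\cdots w_t$ with $a\le s<t\le b$. A section $w_i\cdots w_j$ ($i<j$) is $k$-ascending if $w_i=\min\{w_i,\dots,w_j\}$, $w_j=\max\{w_i,\dots,w_j\}$, $w_j-w_i\geq k$, and there is no $k$-down in it; it is $k$-descending if $w_i=\max$, $w_j=\min$ of $\{w_i,\dots,w_j\}$, $w_i-w_j\geq k$, and there is no $k$-up in it. Such a section is maximal if not contained in another section of the same type. An entry $w_i$ is a $k$-peak of $w$ if it is the last entry of a maximal $k$-ascending section or the first entry of a maximal $k$-descending section; ''the value $j$ is a $k$-peak'' means the entry $w_i=j$ is a $k$-peak. *)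

From HB Require Import structures.
From mathcomp Require Import all_boot all_order all_algebra.
From mathcomp Require Import perm.
Set Implicit Arguments. Unset Strict Implicit. Unset Printing Implicit Defensive.

(* A permutation w = w_1 ... w_n of {1..n} is represented by s : seq nat
   (positions 0-indexed: w_{i+1} = nth 0 s i).  *)

Section KPeaks.
Variable (k : nat) (s : seq nat).
Local Notation w i := (nth 0 s i).
Local Notation n := (size s).

Definition kup_in (a b : nat) : bool :=
  [exists x : 'I_n, [exists y : 'I_n,
     [&& a <= x, x < y, y <= b & w x + k <= w y]]].

Definition kdown_in (a b : nat) : bool :=
  [exists x : 'I_n, [exists y : 'I_n,
     [&& a <= x, x < y, y <= b & w y + k <= w x]]].

Definition is_min_of (p i j : nat) : bool :=
  all (fun x => w p <= w x) (index_iota i j.+1).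
Definition is_max_of (p i j : nat) : bool :=
  all (fun x => w x <= w p) (index_iota i j.+1).

Definition kascending (i j : nat) : bool :=
  [&& i < j, j < n, is_min_of i i j, is_max_of j i j,
      w i + k <= w j & ~~ kdown_in i j].

Definition kdescending (i j : nat) : bool :=
  [&& i < j, j < n, is_max_of i i j, is_min_of j i j,
      w j + k <= w i & ~~ kup_in i j].

Definition max_kascending (i j : nat) : bool :=
  kascending i j &&
  ~~ [exists i' : 'I_n, [exists j' : 'I_n,
        [&& i' <= i, j <= j', ((i' : nat), (j' : nat)) != (i, j)
          & kascending i' j']]].

Definition max_kdescending (i j : nat) : bool :=
  kdescending i j &&
  ~~ [exists i' : 'I_n, [exists j' : 'I_n,
        [&& i' <= i, j <= j', ((i' : nat), (j' : nat)) != (i, j)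
          & kdescending i' j']]].

Definition kpeak_pos (p : nat) : bool :=
  [exists i : 'I_n, max_kascending i p] ||
  [exists j : 'I_n, max_kdescending p j].

Definition kpeak_value (v : nat) : bool :=
  [exists p : 'I_n, (w p == v) && kpeak_pos p].

End KPeaks.

Definition word {n : nat} (w : 'S_n) : seq nat :=
  [seq (w i).+1 | i <- enum 'I_n].

Definition p_peak (n k j : nat) : rat :=
  (#|[set w : 'S_n | kpeak_value k (word w) j]|%:R / #|{perm 'I_n}|%:R)%R.

From mathcomp Require Import all_boot all_order all_algebra.
From mathcomp Require Import perm.
From mathcomp Require Import zify.
Set Implicit Arguments. Unset Strict Implicit. Unset Printing Implicit Defensive.

(* Let P be the position of j, and call a value small if it is at most j - k
   and large if it exceeds j.  Unwinding maximality of k-ascending and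
   k-descending sections, j is a k-peak iff some value is small and, on each
   side of P, the value nearest to P that is small or large is small.  This
   condition ignores the other values, and inserting one of them at every
   possible place multiplies the number of good words by the number of places;
   so it suffices to count the words formed by j and the n - k small or large
   values.  Inserting j into a word of the latter is good exactly at the gaps
   whose neighbours are small or an end of the word, and over all orders of
   the j - k small and n - j large values these gaps number
   (j - k)(j - k + 1)(n - k - 1)!, by inserting the values one at a time. *)

Lemma count_sumE (T : Type) (a : pred T) (r : seq T) :
  count a r = \sum_(x <- r) a x.
Proof. by elim: r => [|x r IH]; rewrite ?big_nil ?big_cons //= IH. Qed.

Lemma sum_nat_const_seq (T : Type) (r : seq T) (c : nat) :
  \sum_(x <- r) c = size r * c.
Proof. by rewrite big_const_seq count_predT iter_addn_0 mulnC. Qed.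

Section Insertion.
Variable T : eqType.

Definition insert_at (i : nat) (x : T) (t : seq T) := take i t ++ x :: drop i t.

Lemma perm_insert_at i x t : perm_eq (insert_at i x t) (x :: t).
Proof. by rewrite /insert_at -cat1s perm_catCA /= cat_take_drop. Qed.

Lemma insert_at_rem x t : x \in t -> insert_at (index x t) x (rem x t) = t.
Proof.
move=> xt; have it : index x t <= size t by rewrite ltnW ?index_mem.
rewrite remE /insert_at take_size_cat ?drop_size_cat ?size_takel //.
by rewrite -drop_index // cat_take_drop.
Qed.

Lemma insert_at_inj x t1 t2 i1 i2 : x \notin t1 -> x \notin t2 ->
  insert_at i1 x t1 = insert_at i2 x t2 -> i1 <= size t1 -> i2 <= size t2 ->
  t1 = t2 /\ i1 = i2.
Proof.
move=> xt1 xt2 E it1 it2.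
have xNtake i t : x \notin t -> x \notin take i t.
  by move=> xt; apply: contra xt; apply: mem_take.
move/eqP: E; rewrite /insert_at eqseq_pivot2l ?xNtake // => /andP [/eqP E1 /eqP E2].
have ei : i1 = i2 by rewrite -(size_takel it1) -(size_takel it2) E1.
by split=> //; rewrite -(cat_take_drop i1 t1) -(cat_take_drop i2 t2) E1 E2.
Qed.

Variables (R : Type) (idx : R) (op : Monoid.com_law idx).

Lemma big_permutations_cons x s (F : seq T -> R) : x \notin s ->
  \big[op/idx]_(t <- permutations (x :: s)) F t =
  \big[op/idx]_(t <- permutations s) \big[op/idx]_(i <- iota 0 (size s).+1)
     F (insert_at i x t).
Proof.
move=> xs; rewrite -big_allpairs_dep.
apply: perm_big; apply: uniq_perm; first exact: permutations_uniq.
  apply: allpairs_uniq_dep => [|t _|]; rewrite ?permutations_uniq ?iota_uniq //.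
  move=> [t1 i1] [t2 i2] /allpairsPdep [t1' [i1' [pt1 hi1 [-> ->]]]].
  move=> /allpairsPdep [t2' [i2' [pt2 hi2 [-> ->]]]] /= E.
  move: pt1 pt2 hi1 hi2; rewrite !mem_permutations !mem_iota /= => pt1 pt2 hi1 hi2.
  have xt1 : x \notin t1' by rewrite (perm_mem pt1).
  have xt2 : x \notin t2' by rewrite (perm_mem pt2).
  rewrite ltnS -(perm_size pt1) in hi1; rewrite ltnS -(perm_size pt2) in hi2.
  by have [-> ->] := insert_at_inj xt1 xt2 E hi1 hi2.
move=> t; rewrite mem_permutations; apply/idP/allpairsPdep => [pt | [t' [i [pt' _ ->]]]].
  have xt : x \in t by rewrite (perm_mem pt) mem_head.
  exists (rem x t), (index x t); rewrite insert_at_rem //; split => //.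
    by rewrite mem_permutations -(perm_cons x) -(permPl (perm_to_rem xt)).
  by rewrite mem_iota /= ltnS -ltnS -[(size s).+1]/(size (x :: s)) -(perm_size pt) index_mem.
by rewrite (perm_trans (perm_insert_at _ _ _)) // perm_cons -mem_permutations.
Qed.

End Insertion.

Lemma iota0S n : iota 0 n.+1 = 0 :: map succn (iota 0 n).
Proof. by rewrite /= -[1]/(1 + 0) iotaDl. Qed.

Lemma count_iota0S (a : pred nat) n :
  count a (iota 0 n.+1) = a 0 + count (fun i => a i.+1) (iota 0 n).
Proof. by rewrite iota0S /= count_map. Qed.

Lemma count_ltn_iota m n c : c <= n -> count (fun v => v < m + c) (iota m n) = c.
Proof. by move=> cn; rewrite -size_filter filter_iota_ltn // size_iota. Qed.

Lemma nth_rev_take (T : Type) (x0 : T) (t : seq T) m x : m <= size t -> x < m ->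
  nth x0 (rev (take m t)) x = nth x0 t (m - x.+1).
Proof. by move=> mt xm; rewrite nth_rev ?size_takel // nth_take //; lia. Qed.

Section FlankedGaps.
Variables (T : eqType) (a : pred T).

(* The gaps of [t], both ends included, whose neighbours satisfy [a]; the
   boolean [b] says whether the left end counts as satisfying [a]. *)
Fixpoint flanked_gaps (b : bool) (t : seq T) : nat :=
  if t is y :: t' then (b && a y) + flanked_gaps (a y) t' else b.

Lemma sum_flanked_gaps_insert x b t :
  \sum_(i <- iota 0 (size t).+1) flanked_gaps b (insert_at i x t) =
  size t * flanked_gaps b t + a x * (b + 2 * count a t + 1).
Proof.
elim: t b => [|y t IH] b.
  by rewrite big_cons big_nil /insert_at /=; case: b; case: (a x).
rewrite iota0S big_cons big_map.
rewrite (eq_bigr (fun i => (b && a y) + flanked_gaps (a y) (insert_at i x t))) //.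
rewrite big_split sum_nat_const_seq size_iota IH /insert_at /=.
by case: b; case: (a x); case: (a y) => /=; lia.
Qed.

Lemma sum_flanked_gaps_permutations L : uniq L ->
  size L * \sum_(t <- permutations L) flanked_gaps true t =
  count a L * (count a L).+1 * (size L)`!.
Proof.
elim: L => [|x L IH] /=; first by rewrite mul0n.
move=> /andP [xL uL].
have -> : \sum_(t <- permutations (x :: L)) flanked_gaps true t =
    size L * \sum_(t <- permutations L) flanked_gaps true t
    + a x * (2 * count a L + 2) * (size L)`!.
  rewrite big_permutations_cons //.
  rewrite (eq_big_seq (fun t => size L * flanked_gaps true t + a x * (2 * count a L + 2))).
    by rewrite big_split -big_distrr sum_nat_const_seq size_permutations // mulnC.
  move=> t; rewrite mem_permutations => pt.
  by rewrite -(perm_size pt) sum_flanked_gaps_insert (seq.permP pt); lia.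
rewrite mulnDr IH // factS.
by case: (a x) => /=; nia.
Qed.

End FlankedGaps.

Lemma first_after (q : pred nat) a x : a < x -> q x ->
  exists r, [/\ a < r <= x, q r & forall z, a < z < r -> ~~ q z].
Proof.
move=> ax qx; have ex : exists r, (a < r) && q r by exists x; rewrite ax qx.
case: (ex_minnP ex) => r /andP [ar qr] r_min.
exists r; split => //; first by rewrite ar r_min ?ax.
move=> z /andP [az zr]; apply/negP => qz.
by have := r_min z; rewrite az qz => /(_ isT); lia.
Qed.

Lemma last_before (q : pred nat) x b : x < b -> q x ->
  exists l, [/\ x <= l < b, q l & forall z, l < z < b -> ~~ q z].
Proof.
move=> xb qx; have ex : exists l, (l < b) && q l by exists x; rewrite xb qx.
have bounded l : (l < b) && q l -> l <= b by case/andP => /ltnW.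
case: (ex_maxnP ex bounded) => l /andP [lb ql] l_max.
exists l; split => //; first by rewrite lb l_max ?xb.
move=> z /andP [lz zb]; apply/negP => qz.
by have := l_max z; rewrite zb qz => /(_ isT); lia.
Qed.

Section KSectionViews.
Variables (k : nat) (s : seq nat).
Local Notation w i := (nth 0 s i).
Local Notation n := (size s).

Lemma is_min_ofP p i q :
  reflect (forall x, i <= x <= q -> w p <= w x) (is_min_of s p i q).
Proof.
apply: (iffP allP) => h x; last by rewrite mem_index_iota ltnS; apply: h.
by move=> hx; apply: h; rewrite mem_index_iota ltnS.
Qed.

Lemma is_max_ofP p i q :
  reflect (forall x, i <= x <= q -> w x <= w p) (is_max_of s p i q).
Proof.
apply: (iffP allP) => h x; last by rewrite mem_index_iota ltnS; apply: h.
by move=> hx; apply: h; rewrite mem_index_iota ltnS.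
Qed.

Lemma kup_inP a b : reflect
  (exists x y, [/\ a <= x < y, y <= b, y < n & w x + k <= w y]) (kup_in k s a b).
Proof.
apply: (iffP existsP) => [[x /existsP [y /and4P [ax xy yb up]]] | [x [y]]].
  by exists x, y; rewrite ax xy.
case=> /andP [ax xy] yb yn up; have xn : x < n by apply: ltn_trans yn.
by exists (Ordinal xn); apply/existsP; exists (Ordinal yn); apply/and4P.
Qed.

Lemma kdown_inP a b : reflect
  (exists x y, [/\ a <= x < y, y <= b, y < n & w y + k <= w x]) (kdown_in k s a b).
Proof.
apply: (iffP existsP) => [[x /existsP [y /and4P [ax xy yb down]]] | [x [y]]].
  by exists x, y; rewrite ax xy.
case=> /andP [ax xy] yb yn down; have xn : x < n by apply: ltn_trans yn.
by exists (Ordinal xn); apply/existsP; exists (Ordinal yn); apply/and4P.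
Qed.

End KSectionViews.

Section PeakPosition.
Variables (k j : nat) (s : seq nat).
Hypotheses (k_gt0 : 0 < k) (s_uniq : uniq s) (j_in_s : j \in s).
Local Notation w i := (nth 0 s i).
Local Notation n := (size s).
Local Notation P := (index j s).

Lemma kascending_block i m r :
  i <= m < r -> r < n -> w i + k <= j -> j <= w r ->
  (forall x, i <= x <= m -> w i <= w x <= j) -> ~~ kdown_in k s i m ->
  (forall z, m < z < r -> w z <= j < w z + k) ->
  kascending k s i r.
Proof.
move=> /andP [im mr] rn small_i large_r head no_down mid.
have split3 x : i <= x <= r -> [\/ i <= x <= m, m < x < r | x = r].
  case: (leqP x m) => [xm|mx] /andP [ix xr]; first by apply: Or31; rewrite ix.
  by case: (ltnP x r) => xr'; [apply: Or32; apply/andP | apply: Or33; lia].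
have le_j x : i <= x < r -> w x <= j.
  move=> hx; have /split3 [/head/andP [] //|/mid/andP [] //|] : i <= x <= r by lia.
  lia.
apply/and5P; split; [lia | done | | | apply/andP; split; first lia].
- by apply/is_min_ofP => x /split3 [/head/andP [] //|/mid/andP [? ?]|->]; lia.
- apply/is_max_ofP => x hx; case: (ltnP x r) => xr; last by have -> : x = r by lia.
  by have := le_j x; lia.
- apply: contra no_down => /kdown_inP [x [y [/andP [ix xy] yr yn down]]].
  have wx := le_j x; have /split3 [ym|/mid|] : i <= y <= r by lia.
  - by apply/kdown_inP; exists x, y; rewrite ix xy; split; lia.
  - by move=> /andP [? ?]; lia.
  - by move=> ye; rewrite ye in down; lia.
Qed.

Lemma kdescending_block l m r :
  l < m <= r -> r < n -> j <= w l -> w r + k <= j ->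
  (forall z, l < z < m -> w z <= j < w z + k) ->
  (forall x, m <= x <= r -> w r <= w x <= j) -> ~~ kup_in k s m r ->
  kdescending k s l r.
Proof.
move=> /andP [lm mr] rn large_l small_r mid tail no_up.
have split3 x : l <= x <= r -> [\/ x = l, l < x < m | m <= x <= r].
  case: (ltnP l x) => [lx|xl] /andP [lx' xr]; last by apply: Or31; lia.
  by case: (ltnP x m) => xm; [apply: Or32; apply/andP | apply: Or33; apply/andP].
have le_j x : l < x <= r -> w x <= j.
  move=> hx; have /split3 [|/mid/andP [] //|/tail/andP [] //] : l <= x <= r by lia.
  lia.
apply/and5P; split; [lia | done | | | apply/andP; split; first lia].
- apply/is_max_ofP => x hx; case: (ltnP l x) => lx; last by have -> : x = l by lia.
  by have := le_j x; lia.
- by apply/is_min_ofP => x /split3 [->|/mid/andP [? ?]|/tail/andP [] //]; lia.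
- apply: contra no_up => /kup_inP [x [y [/andP [lx xy] yr yn up]]].
  have wy := le_j y; have /split3 [xe|/mid/andP [? ?]|mx] : l <= x <= r by lia.
  - by rewrite xe in up; lia.
  - lia.
  - by apply/kup_inP; exists x, y; split; lia.
Qed.

Definition shielded_left :=
  forall x, x < P -> j < w x -> exists2 y, x < y < P & w y + k <= j.
Definition shielded_right :=
  forall x, P < x < n -> j < w x -> exists2 y, P < y < x & w y + k <= j.
Definition has_small_value := exists2 y, y < n & w y + k <= j.

Let relevant z := (j < w z) || (w z + k <= j).

Let P_lt_n : P < n. Proof. by rewrite index_mem. Qed.
Let wP : w P = j. Proof. exact: nth_index. Qed.
Let pos_j x : x < n -> w x = j -> x = P.
Proof. by move=> xn <-; rewrite index_uniq. Qed.

Lemma shielded_of_max_kascending i : max_kascending k s i P ->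
  [/\ shielded_left, shielded_right & has_small_value].
Proof.
case/andP => /and5P [iP _ /is_min_ofP i_min /is_max_ofP P_max /andP [small_i no_down]].
rewrite wP in small_i P_max => /existsPn no_ext; split; last by exists i; lia.
  move=> x xP large_x; case: (leqP i x) => ix; last by exists i; lia.
  by have := P_max x; lia.
move=> x /andP [Px xn] large_x.
have [r [/andP [Pr rx] /orP [large_r | small_r] r_first]] :=
  first_after (q := relevant) Px (introT orP (or_introl large_x)); last first.
  exists r => //; rewrite Pr ltn_neqAle rx andbT.
  by apply: contraTneq small_r => ->; lia.
have [i_lt_n rn] : i < n /\ r < n by lia.
have /existsPn/(_ (Ordinal rn)) := no_ext (Ordinal i_lt_n).
rewrite leqnn (ltnW Pr) xpair_eqE eqxx (gtn_eqF Pr) /= => /negP [].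
apply: (kascending_block (m := P)) => //; try lia.
- by move=> z hz; have := i_min z hz; have := P_max z hz; lia.
- by move=> z /r_first; rewrite /relevant; lia.
Qed.

Lemma shielded_of_max_kdescending q : max_kdescending k s P q ->
  [/\ shielded_left, shielded_right & has_small_value].
Proof.
case/andP => /and5P [Pq qn /is_max_ofP P_max /is_min_ofP q_min /andP [small_q no_up]].
rewrite wP in small_q P_max => /existsPn no_ext; split; last by exists q.
  move=> x xP large_x.
  have [l [/andP [xl lP] /orP [large_l | small_l] l_last]] :=
    last_before (q := relevant) xP (introT orP (or_introl large_x)); last first.
    exists l => //; rewrite lP andbT ltn_neqAle xl andbT.
    by apply: contraTneq small_l => <-; lia.
  have ln : l < n by lia.
  have /(_ (Ordinal ln))/existsPn/(_ (Ordinal qn)) := no_ext.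
  rewrite leqnn (ltnW lP) xpair_eqE eqxx (ltn_eqF lP) /= => /negP [].
  apply: (kdescending_block (m := P)) => //; try lia.
  - by move=> z /l_last; rewrite /relevant; lia.
  - by move=> z hz; have := q_min z hz; have := P_max z hz; lia.
move=> x /andP [Px xn] large_x; case: (leqP x q) => xq; last by exists q; lia.
by have := P_max x; lia.
Qed.

Lemma max_kascending_of_shielded_right l : shielded_right ->
  kascending k s l P -> [exists i : 'I_n, max_kascending k s i P].
Proof.
move=> sh_right asc_l; have ex : exists i, kascending k s i P by exists l.
case: (ex_minnP ex) => i asc_i i_min; have /and3P [iP _ _] := asc_i.
have i_lt_n : i < n by lia.
apply/existsP; exists (Ordinal i_lt_n); rewrite /max_kascending asc_i /=.
apply/existsPn => i'; apply/existsPn => q'; apply/negP => /and4P [i'i Pq' ne asc'].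
case: (eqVneq (q' : nat) P) => [q'P | q'P].
  rewrite q'P in asc' ne; have := i_min _ asc'.
  by move: ne; rewrite xpair_eqE eqxx andbT => /eqP; lia.
have /and5P [i'q' q'n _ /is_max_ofP q'_max /andP [_ no_down]] := asc'.
have large_q' : j < w q'.
  rewrite ltn_neqAle -{2}wP q'_max ?andbT; last lia.
  by apply: contra q'P => /eqP e; apply/eqP/pos_j.
have [y /andP [Py yq'] small_y] : exists2 y, P < y < q' & w y + k <= j.
  by apply: sh_right large_q'; lia.
apply: (negP no_down); apply/kdown_inP; exists P, y; rewrite wP; split; lia.
Qed.

Lemma max_kdescending_of_shielded_left r : shielded_left ->
  kdescending k s P r -> [exists q : 'I_n, max_kdescending k s P q].
Proof.
move=> sh_left desc_r; have ex : exists q, kdescending k s P q by exists r.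
have bounded q : kdescending k s P q -> q <= n by case/and3P => _ /ltnW.
case: (ex_maxnP ex bounded) => q desc_q q_max; have /and3P [Pq qn _] := desc_q.
apply/existsP; exists (Ordinal qn); rewrite /max_kdescending desc_q /=.
apply/existsPn => i'; apply/existsPn => q'; apply/negP => /and4P [i'_le_P qq' ne desc'].
case: (eqVneq (i' : nat) P) => [i'P | i'P].
  rewrite i'P in desc' ne; have := q_max _ desc'.
  by move: ne; rewrite xpair_eqE eqxx /= => /eqP; lia.
have /and5P [i'q' q'n /is_max_ofP i'_max _ /andP [_ no_up]] := desc'.
have i'n : i' < n by lia.
have large_i' : j < w i'.
  rewrite ltn_neqAle -{2}wP i'_max ?andbT; last lia.
  by apply: contra i'P => /eqP e; apply/eqP/pos_j.
have [y /andP [i'y yP] small_y] : exists2 y, i' < y < P & w y + k <= j.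
  by apply: sh_left large_i'; lia.
apply: (negP no_up); apply/kup_inP; exists y, P; rewrite wP; split; lia.
Qed.

Lemma kpeak_pos_of_shielded :
  shielded_left -> shielded_right -> has_small_value -> kpeak_pos k s P.
Proof.
move=> sh_left sh_right [y yn small_y]; rewrite /kpeak_pos.
case: (ltngtP y P) => [yP | Py | yP]; last by move: small_y; rewrite yP wP; lia.
  apply/orP; left.
  have [l [/andP [yl lP] /orP [large_l | small_l] l_last]] :=
    last_before (q := relevant) yP (introT orP (or_intror small_y)).
    have [z /andP [lz zP] small_z] := sh_left _ lP large_l.
    by have := l_last z; rewrite /relevant small_z orbT lz zP => /(_ isT).
  apply: (max_kascending_of_shielded_right sh_right (l := l)).
  apply: (kascending_block (m := l)) => //; try lia.
  - by move=> x /andP [lx xl]; (have -> : x = l by lia); lia.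
  - by apply/kdown_inP => -[x [z [/andP [lx xz] zl _ _]]]; lia.
  - by move=> z /l_last; rewrite /relevant; lia.
apply/orP; right.
have [r [/andP [Pr ry] /orP [large_r | small_r] r_first]] :=
  first_after (q := relevant) Py (introT orP (or_intror small_y)).
  have [z /andP [Pz zr] small_z] : exists2 z, P < z < r & w z + k <= j.
    by apply: sh_right large_r; lia.
  by have := r_first z; rewrite /relevant small_z orbT Pz zr => /(_ isT).
apply: (max_kdescending_of_shielded_left sh_left (r := r)).
apply: (kdescending_block (m := r)) => //; try lia.
- by move=> z /r_first; rewrite /relevant; lia.
- by move=> x /andP [rx xr]; (have -> : x = r by lia); lia.
- by apply/kup_inP => -[x [z [/andP [rx xz] zr _ _]]]; lia.
Qed.

Lemma kpeak_valueP :
  kpeak_value k s j <-> [/\ shielded_left, shielded_right & has_small_value].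
Proof.
split=> [/existsP [p /andP [/eqP wp]] | [sh_left sh_right small]].
  rewrite (pos_j (ltn_ord p) wp) => /orP [/existsP [i] | /existsP [q]].
    exact: shielded_of_max_kascending.
  exact: shielded_of_max_kdescending.
apply/existsP; exists (Ordinal P_lt_n); rewrite /= wP eqxx /=.
exact: kpeak_pos_of_shielded.
Qed.

End PeakPosition.

Section PeakCondition.
Variables (k j : nat).
Hypothesis k_gt0 : 0 < k.

Definition small v := v + k <= j.
Definition large v := j < v.

(* Reading [L] away from [j], a small value is met before any large one. *)
Fixpoint shielded (L : seq nat) : bool :=
  if L is v :: L' then small v || ~~ large v && shielded L' else true.

Definition peak_cond (s : seq nat) :=
  let P := index j s in
  [&& shielded (rev (take P s)), shielded (drop P.+1 s) & has small s].

Lemma shielded_nthP L : shielded L <->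
  (forall x, x < size L -> large (nth 0 L x) -> exists2 y, y < x & small (nth 0 L y)).
Proof.
elim: L => [|v L IH] /=; first by split=> // _ x.
case: (boolP (small v)) => [small_v | /negPf small_v] /=.
  split=> // _ [|x] _ /= large_x; last by exists 0.
  by move: small_v large_x; rewrite /small /large; lia.
case: (boolP (large v)) => [large_v | not_large_v] /=.
  by split=> // /(_ 0 isT large_v) [].
rewrite IH; split=> [sh [|x] //= xL large_x | sh x xL large_x].
  by rewrite large_x in not_large_v.
  by have [y yx small_y] := sh x xL large_x; exists y.+1.
have [[|y] //= yx small_y] := sh x.+1 xL large_x; first by rewrite small_y in small_v.
by exists y.
Qed.

Section OfWord.
Variable s : seq nat.
Hypotheses (s_uniq : uniq s) (j_in_s : j \in s).
Local Notation w i := (nth 0 s i).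
Local Notation n := (size s).
Local Notation P := (index j s).

Let P_lt_n : P < n. Proof. by rewrite index_mem. Qed.

Lemma shielded_drop_index : shielded (drop P.+1 s) <-> shielded_right k j s.
Proof.
rewrite shielded_nthP size_drop /small /large; split=> sh x.
  move=> /andP [Px xn] large_x.
  have [||y yx small_y] := sh (x - P.+1); [lia | by rewrite nth_drop subnKC |].
  by exists (P.+1 + y); [lia | rewrite -nth_drop].
rewrite nth_drop => xn /sh [|y /andP [Py yx] small_y]; first lia.
by exists (y - P.+1); rewrite ?nth_drop ?subnKC //; lia.
Qed.

Lemma shielded_rev_take_index : shielded (rev (take P s)) <-> shielded_left k j s.
Proof.
have Pn := ltnW P_lt_n.
rewrite shielded_nthP size_rev size_takel // /small /large; split=> sh x xP.
  move=> large_x; have [||y yx small_y] := sh (P - x.+1).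
  - lia.
  - by rewrite nth_rev_take; [have -> : P - (P - x.+1).+1 = x by lia | done | lia].
  by exists (P - y.+1); [lia | rewrite -nth_rev_take //; lia].
rewrite nth_rev_take // => /sh [|y /andP [xy yP] small_y]; first lia.
exists (P - y.+1); first lia.
by rewrite nth_rev_take; [have -> : P - (P - y.+1).+1 = y by lia | done | lia].
Qed.

Lemma kpeak_value_peak_cond : kpeak_value k s j = peak_cond s.
Proof.
apply/idP/idP => [/(kpeak_valueP k_gt0 s_uniq j_in_s) [sh_left sh_right [y yn small_y]]
                 | /and3P [/shielded_rev_take_index sh_left /shielded_drop_index sh_right]].
  apply/and3P; split; [exact/shielded_rev_take_index | exact/shielded_drop_index |].
  by apply/(has_nthP 0); exists y.
move=> /(has_nthP 0) [y yn small_y]; apply/(kpeak_valueP k_gt0 s_uniq j_in_s).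
by split=> //; exists y.
Qed.

End OfWord.

Lemma small_j : small j = false.
Proof. by rewrite /small; lia. Qed.

Lemma shielded_filter (a : pred nat) L :
  (forall v, small v || large v -> a v) -> shielded (filter a L) = shielded L.
Proof.
move=> a_rel; elim: L => [|v L IH] //=.
case: (boolP (a v)) => [av | /negP nav] /=; first by rewrite IH.
have /norP [/negPf -> /negPf ->] : ~~ (small v || large v) by apply/negP => /a_rel.
by rewrite IH.
Qed.

Lemma peak_cond_pivot A B : j \notin A ->
  peak_cond (A ++ j :: B) = [&& shielded (rev A), shielded B & has small (A ++ j :: B)].
Proof.
move=> jA; rewrite /peak_cond take_pivot // index_pivot //.
by rewrite -cat_rcons drop_size_cat // size_rcons.
Qed.

Lemma peak_cond_filter (a : pred nat) s : a j ->
  (forall v, small v || large v -> a v) -> j \in s ->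
  peak_cond (filter a s) = peak_cond s.
Proof.
move=> aj a_rel js.
have [A [B [-> jA]]] : exists A B, s = A ++ j :: B /\ j \notin A.
  exists (take (index j s) s), (drop (index j s).+1 s).
  rewrite -drop_index // cat_take_drop; split=> //.
  by apply/negP => /index_ltn; rewrite ltnn.
have jfA : j \notin filter a A by rewrite mem_filter negb_and jA orbT.
rewrite filter_cat /= aj !peak_cond_pivot // -filter_rev !shielded_filter //.
congr [&& _, _ & _]; rewrite !has_cat /= small_j !has_count !count_filter.
have small_a : predI small a =1 small.
  by move=> v /=; case: (boolP (small v)) => //= sv; rewrite a_rel ?sv.
by rewrite !(eq_count small_a).
Qed.

Lemma count_peak_cond_insert_neutral x s :
  x \notin s -> ~~ small x -> ~~ large x -> x != j -> j \in s ->
  count peak_cond (permutations (x :: s)) = (size s).+1 * count peak_cond (permutations s).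
Proof.
move=> xs sx lx xj js.
have x_irrelevant v : small v || large v -> v != x.
  by apply: contraTneq => ->; rewrite negb_or sx.
rewrite !count_sumE big_permutations_cons // big_distrr big_seq [RHS]big_seq.
apply: eq_bigr => t; rewrite mem_permutations => pt.
have [jt xt] : j \in t /\ x \notin t by rewrite !(perm_mem pt).
rewrite (eq_bigr (fun _ => peak_cond t : nat)) ?sum_nat_const_seq ?size_iota // => i _.
have j_ins : j \in insert_at i x t by rewrite (perm_mem (perm_insert_at _ _ _)) inE jt orbT.
have jx : predC1 x j by rewrite /= eq_sym.
rewrite -(peak_cond_filter jx x_irrelevant j_ins) /insert_at filter_cat /= eqxx.
by rewrite -filter_cat cat_take_drop peak_cond_filter.
Qed.

Lemma count_shielded_split t R : all (fun v => small v || large v) t ->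
  count (fun i => shielded (rev (take i t) ++ R) && shielded (drop i t))
        (iota 0 (size t).+1) = flanked_gaps small (shielded R) t.
Proof.
elim: t R => [|y t IH] R; first by rewrite /= addn0 andbT.
case/andP => rel_y rel_t; rewrite count_iota0S.
rewrite (eq_count (a2 := fun i => shielded (rev (take i t) ++ y :: R) && shielded (drop i t))).
  by rewrite IH //=; case: (small y) rel_y => //= ->.
by move=> i /=; rewrite rev_cons cat_rcons.
Qed.

Lemma count_peak_cond_insert_j L : j \notin L ->
  all (fun v => small v || large v) L -> has small L ->
  count peak_cond (permutations (j :: L)) =
  \sum_(t <- permutations L) flanked_gaps small true t.
Proof.
move=> jL rel_L small_L.
rewrite count_sumE big_permutations_cons // big_seq [RHS]big_seq.
apply: eq_bigr => t; rewrite mem_permutations => pt.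
have jt : j \notin t by rewrite (perm_mem pt).
rewrite -(perm_size pt) -count_sumE -(count_shielded_split [::]) ?(perm_all _ pt) //.
apply: eq_count => i; rewrite /insert_at peak_cond_pivot; last first.
  by apply: contra jt; apply: mem_take.
by rewrite cats0 has_cat /= small_j -has_cat cat_take_drop (perm_has _ pt) small_L andbT.
Qed.

Lemma count_peak_cond_insert_neutrals N T : uniq (N ++ T) ->
  all (fun v => [&& ~~ small v, ~~ large v & v != j]) N -> j \in T ->
  count peak_cond (permutations (N ++ T)) * (size T)`! =
  (size (N ++ T))`! * count peak_cond (permutations T).
Proof.
elim: N => [|x N IH] /=; first by rewrite mulnC.
case/andP => xNT uNT /andP [/and3P [sx lx xj] neutral_N] jT.
rewrite count_peak_cond_insert_neutral // ?mem_cat ?jT ?orbT //.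
by rewrite -mulnA IH // factS mulnA.
Qed.

Lemma count_peak_cond_iota_no_small n :
  j <= k -> count peak_cond (permutations (iota 1 n)) = 0.
Proof.
move=> jk; apply/eqP; rewrite -leqn0 leqNgt -has_count; apply/hasPn => t.
rewrite mem_permutations => pt; rewrite /peak_cond (perm_has _ pt).
by apply/negP => /and3P [_ _ /hasP [v]]; rewrite mem_iota /small; lia.
Qed.

Section IotaValues.
Variable n : nat.
Hypothesis j_range : k < j <= n.

Lemma count_small_iota : count small (iota 1 n) = j - k.
Proof.
rewrite (eq_count (a2 := fun v => v < 1 + (j - k))) ?count_ltn_iota //; first lia.
by move=> v; rewrite /small; lia.
Qed.

Lemma count_large_iota : count large (iota 1 n) = n - j.
Proof.
have := count_predC large (iota 1 n); rewrite size_iota.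
rewrite (eq_count (a1 := predC large) (a2 := fun v => v < 1 + j)) ?count_ltn_iota //; try lia.
by move=> v; rewrite /= /large; lia.
Qed.

Let neutrals := [seq v <- iota 1 n | [&& ~~ small v, ~~ large v & v != j]].
Let relevants := [seq v <- iota 1 n | small v || large v].

Lemma perm_iota_neutrals_relevants : perm_eq (iota 1 n) (neutrals ++ j :: relevants).
Proof.
apply: uniq_perm; first exact: iota_uniq.
  rewrite cat_uniq /= !filter_uniq ?iota_uniq // !mem_filter small_j /large ltnn /=.
  rewrite eqxx andbT /=; apply/hasPn => v; rewrite !mem_filter.
  by case: (small v); case: (large v).
move=> v; rewrite mem_cat in_cons !mem_filter.
case: (eqVneq v j) => [->|vj] /=; first by rewrite mem_iota orbT; lia.
by case: (small v); case: (large v); rewrite ?andbF ?orbF.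
Qed.

Lemma count_small_relevants : count small relevants = j - k.
Proof.
rewrite count_filter (eq_count (a2 := small)) ?count_small_iota //.
by move=> v /=; case: (small v).
Qed.

Lemma size_relevants : size relevants = n - k.
Proof.
rewrite size_filter -[count _ _]/(count (predU small large) (iota 1 n)).
have := count_predUI small large (iota 1 n).
rewrite count_small_iota count_large_iota.
rewrite (eq_count (a1 := predI small large) (a2 := pred0)) ?count_pred0; first lia.
by move=> v /=; rewrite /small /large; lia.
Qed.

Lemma count_peak_cond_iota :
  count peak_cond (permutations (iota 1 n)) * ((n - k) * (n - k).+1) =
  (j - k) * (j - k).+1 * n`!.
Proof.
have split_iota := perm_iota_neutrals_relevants.
have uniq_split : uniq (neutrals ++ j :: relevants).
  by rewrite -(perm_uniq split_iota) iota_uniq.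
have size_split : size (neutrals ++ j :: relevants) = n.
  by rewrite -(perm_size split_iota) size_iota.
move: (uniq_split); rewrite cat_uniq => /and3P [_ _ /andP [j_notin_rel uniq_rel]].
have small_rel := count_small_relevants.
have size_rel := size_relevants.
have has_small_rel : has small relevants by rewrite has_count small_rel; lia.
have := count_peak_cond_insert_neutrals uniq_split (filter_all _ _) (mem_head _ _).
rewrite (seq.permP (perm_permutations split_iota)) size_split /= size_rel factS.
rewrite (count_peak_cond_insert_j j_notin_rel) ?filter_all //.
have := sum_flanked_gaps_permutations small uniq_rel; rewrite size_rel small_rel.
set S := \sum_(_ <- _) _; set c := count _ _ => gaps_eq count_eq.
apply/eqP; rewrite -(eqn_pmul2r (fact_gt0 (n - k))); apply/eqP.
nia.
Qed.

End IotaValues.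

End PeakCondition.

Lemma perm_word_iota n (w : 'S_n) : perm_eq (word w) (iota 1 n).
Proof.
have -> : word w = map (addn 1) (map val (map w (enum 'I_n))) by rewrite /word -!map_comp.
rewrite -[1]/(1 + 0) iotaDl -val_enum_ord; apply/perm_map/perm_map.
apply: uniq_perm; [by rewrite map_inj_uniq ?enum_uniq //; apply: perm_inj | exact: enum_uniq |].
move=> i; rewrite mem_enum; apply/mapP; exists ((w^-1)%g i); first by rewrite mem_enum.
by rewrite permKV.
Qed.

Lemma word_inj n : injective (@word n).
Proof.
move=> w1 w2 /eq_in_map h; apply/permP => i.
by apply/val_inj/succn_inj/h; rewrite mem_enum.
Qed.

Lemma card_set_word n (q : pred (seq nat)) :
  #|[set w : 'S_n | q (word w)]| = count q (permutations (iota 1 n)).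
Proof.
have uniq_words : uniq (map (@word n) (enum 'S_n)).
  by rewrite map_inj_uniq ?enum_uniq //; apply: word_inj.
have words_perm : perm_eq (map (@word n) (enum 'S_n)) (permutations (iota 1 n)).
  apply: uniq_perm => //; first exact: permutations_uniq.
  have sub : {subset map (@word n) (enum 'S_n) <= permutations (iota 1 n)}.
    by move=> t /mapP [w _ ->]; rewrite mem_permutations perm_word_iota.
  apply: (uniq_min_size uniq_words sub _).2.
  by rewrite size_permutations ?iota_uniq // size_iota size_map -cardE card_Sn.
by rewrite -(seq.permP words_perm) count_map cardsE cardE size_filter enumT.
Qed.

Theorem proposition3p3 (n j k : nat) :
  2 <= n -> 1 <= j <= n -> 1 <= k <= n - 1 ->
  p_peak n k j =
    (if j <= k then 0%R
     else (((j - k) * (j - k + 1))%:R / ((n - k) * (n - k + 1))%:R)%R).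
Proof.
move=> n_ge2 j_range k_range; have k_gt0 : 0 < k by lia.
rewrite /p_peak card_Sn (card_set_word n (kpeak_value k ^~ j)).
rewrite (eq_in_count (a2 := peak_cond k j)); last first.
  move=> t; rewrite mem_permutations => pt; apply: kpeak_value_peak_cond => //.
    by rewrite (perm_uniq pt) iota_uniq.
  by rewrite (perm_mem pt) mem_iota; lia.
case: ifPn => [j_le_k | j_gt_k].
  by rewrite count_peak_cond_iota_no_small // GRing.mul0r.
have j_range' : k < j <= n by lia.
have count_eq := count_peak_cond_iota k_gt0 j_range'.
apply/eqP; rewrite GRing.eqr_div ?Num.Theory.pnatr_eq0 ?muln_eq0 -?lt0n ?fact_gt0 //; last lia.
by rewrite -!GRing.natrM Num.Theory.eqr_nat !addn1 count_eq mulnC.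
Qed.
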